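(* Let $G$ be an $n$-node graph with arboricity $\lambda$ and maximum degree $\Delta\ge(2\lambda)^{20}$, and let $d=\Delta^{1/10}$. Let $G_0'$ be any subgraph of $G$ induced by a set of vertices (the graph at the start of a phase), and define $G_1$ as the graph obtained from $G_0'$ by removing all vertices in the $60$ lowest-index layers of the greedy-peeling $H$-partition with out-degree $d$, and for $i\ge1$ let $G_{i+1}$ be obtained from $G_i$ by removing all vertices in the $20\cdot 2^i$ lowest-index layers of the greedy-peeling $H$-partition of $G_i$ with out-degree $d$. Then for all $i\ge1$, $G_i$ contains at most $n'/\Delta^{2^i}$ nodes, where $n'=n/\Delta$.
   Context: The arboricity of a graph is the minimum number of forests into which its edges can be partitioned. An $H$-partition with out-degree $d$ is a partition of the vertices into layers $L_1,\dots,L_\ell$ such that every $v\in L_i$ has at most $d$ neighbors in $\bigcup_{j\ge i}L_j$; the greedy peeling algorithm constructs it by repeatedly, for $i=1,2,\dots$, putting all remaining vertices of remaining degree at most $d$ into $L_i$ and removing them. Layers of a graph are with respect to its own (original) edges; removing the lowest layers of the $H$-partition of a graph leaves a graph whose $H$-partition consists of the remaining layers in order. *)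

From mathcomp Require Import all_boot.
Set Implicit Arguments. Unset Strict Implicit. Unset Printing Implicit Defensive.

Section Graphs.
Variable V : finType.
Variable e : rel V.

Definition simple_graph := symmetric e /\ irreflexive e.

Definition forest (f : rel V) : Prop :=
  ~ exists s : seq V, [/\ uniq s, 3 <= size s & cycle f s].

Definition forest_partition (k : nat) : Prop :=
  exists c : V -> V -> 'I_k, (forall x y, c x y = c y x) /\
    forall i : 'I_k, forest (fun x y => e x y && (c x y == i)).

Definition arboricity (lam : nat) : Prop :=
  forest_partition lam /\ forall k, forest_partition k -> lam <= k.

Definition deg (v : V) : nat := #|[set u | e v u]|.
Definition maxdeg : nat := \max_(v : V) deg v.

Definition deg_in (S : {set V}) (v : V) : nat := #|[set u in S | e v u]|.

(* One step of greedy peeling with out-degree d = Delta^(1/10):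
   remove the vertices of remaining degree <= d, i.e. deg^10 <= Delta
   (for a natural number deg, deg <= Delta^(1/10) iff deg^10 <= Delta). *)
Definition peel (Delta : nat) (S : {set V}) : {set V} :=
  [set v in S | ~~ (deg_in S v ^ 10 <= Delta)].

(* Removing the k lowest-index layers of the H-partition of G[S]. *)
Definition remove_layers (Delta k : nat) (S : {set V}) : {set V} :=
  iter k (peel Delta) S.

(* phase_graph Delta S0 i = G_i, with G_0 = G_0' = G[S0],
   G_1 = G_0' minus its 60 lowest layers,
   G_{i+1} = G_i minus its 20 * 2^i lowest layers (i >= 1). *)
Fixpoint phase_graph (Delta : nat) (S0 : {set V}) (i : nat) : {set V} :=
  match i with
  | 0 => S0
  | j.+1 => remove_layers Delta (if j == 0 then 60 else 20 * 2 ^ j)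
                          (phase_graph Delta S0 j)
  end.

End Graphs.

From mathcomp Require Import all_boot zify.
Set Implicit Arguments. Unset Strict Implicit.

(* In a forest every nonempty vertex set spans a vertex with at most one
   neighbour inside it, so peeling such leaves shows that the degrees induced
   on S sum to at most 2|S|; splitting the edges into lam forests, the degree
   sum of G[S] is at most 2 lam |S| <= Delta^(1/20) |S|.  A vertex survives a
   peeling step only if its degree exceeds Delta^(1/10), hence each step
   shrinks the vertex set by a factor Delta^(1/20).  Removing 20 * 2^i layers
   thus divides the size by Delta^(2^i), and the first 60 layers by
   Delta^3 = Delta * Delta^2, which telescopes to |G_i| <= n / Delta^(1 + 2^i). *)

Section Forest.
Variable V : finType.
Variable f : rel V.
Hypothesis f_sym : symmetric f.
Hypothesis f_irr : irreflexive f.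
Hypothesis f_forest : forest f.

Lemma forest_path_chord (y u : V) (p : seq V) :
  uniq (y :: p) -> path f y p -> u \in p -> f y u -> u = head y p.
Proof.
move=> uniq_yp path_yp up fyu; apply/eqP/negPn/negP => u_not_head.
set k := index u p.
have k_gt0 : 0 < k.
  by rewrite lt0n; apply: contra u_not_head => /eqP k0; rewrite -nth0 -k0 nth_index.
have k_lt : k < size p by rewrite index_mem.
apply: f_forest; exists (y :: take k.+1 p); split.
- move: uniq_yp => /= /andP[yp uniq_p]; rewrite take_uniq // andbT.
  by apply: contra yp; apply: mem_take.
- by rewrite /= size_takel.
- rewrite /cycle rcons_path; apply/andP; split.
    by move: path_yp; rewrite -{1}(cat_take_drop k.+1 p) cat_path => /andP[].
  by rewrite -nth_last size_takel //= nth_take // nth_index // f_sym.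
Qed.

Lemma forest_leaf (S : {set V}) :
  S != set0 -> exists2 y, y \in S & deg_in f S y <= 1.
Proof.
move=> S_neq0; apply/exists_inP/contraT => /exists_inPn no_leaf; exfalso.
suff long_paths n : exists y p,
    [/\ uniq (y :: p), path f y p, all [in S] (y :: p) & size p = n].
  have [y [p [uniq_yp _ /allP yp_in_S size_p]]] := long_paths #|S|.
  have /(uniq_leq_size uniq_yp) : {subset y :: p <= enum S}.
    by move=> x /yp_in_S; rewrite mem_enum.
  by rewrite -cardE /= size_p ltnn.
elim: n => [|n [y [p [uniq_yp path_yp yp_in_S size_p]]]].
  by case/set0Pn: S_neq0 => x xS; exists x, [::]; rewrite /= xS.
have yS : y \in S by case/andP: yp_in_S.
suff [u [uS fyu u_new]] : exists u, [/\ u \in S, f y u & u \notin y :: p].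
  exists u, (y :: p); split; last by rewrite /= size_p.
  - by rewrite cons_uniq u_new.
  - by rewrite /= f_sym fyu.
  - by rewrite /= uS.
have /card_gt1P [u1 [u2 []]] : 1 < deg_in f S y by rewrite ltnNge no_leaf.
rewrite !inE => /andP[u1S fyu1] /andP[u2S fyu2] u12.
have old_head u : f y u -> u \in y :: p -> u = head y p.
  move=> fyu; rewrite inE => /predU1P[uy|]; first by rewrite uy f_irr in fyu.
  by move=> up; apply: forest_path_chord uniq_yp path_yp up fyu.
case: (boolP (u1 \in y :: p)) => [u1_old|]; last by exists u1.
case: (boolP (u2 \in y :: p)) => [u2_old|]; last by exists u2.
by move: u12; rewrite (old_head u1 fyu1 u1_old) (old_head u2 fyu2 u2_old) eqxx.
Qed.

Lemma deg_in_setD1 (S : {set V}) (v y : V) :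
  deg_in f S v = ((y \in S) && f v y) + deg_in f (S :\ y) v.
Proof.
rewrite /deg_in (cardsD1 y) inE; congr (_ + _).
by apply: eq_card => u; rewrite !inE andbA.
Qed.

Lemma deg_in_sum (S : {set V}) (y : V) :
  deg_in f S y = \sum_(v in S) f y v.
Proof.
rewrite /deg_in -sum1dep_card big_mkcondr /=.
by apply: eq_bigr => v _; case: (f y v).
Qed.

Lemma forest_sum_deg_in (S : {set V}) :
  \sum_(v in S) deg_in f S v <= 2 * #|S|.
Proof.
have [n] := ubnP #|S|; elim: n S => // n IHn S /[!ltnS] S_le_n.
have [->|/forest_leaf[y yS leaf_y]] := eqVneq S set0; first by rewrite big_set0.
have S_card : #|S| = #|S :\ y|.+1 by rewrite (cardsD1 y) yS.
have edges_to_y : \sum_(v in S :\ y) ((y \in S) && f v y) <= 1.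
  apply: leq_trans leaf_y; rewrite yS deg_in_sum [X in _ <= X](big_setD1 y) //=.
  rewrite f_irr add0n.
  by under eq_bigr => v _ do rewrite f_sym.
rewrite (big_setD1 y) //=.
under eq_bigr => v _ do rewrite (deg_in_setD1 S v y).
rewrite big_split /=.
have := IHn (S :\ y); rewrite -S_card => /(_ S_le_n).
lia.
Qed.

End Forest.

(* [r^20 D^2 <= (r t)^20 <= (c s)^20 <= D s^20]; applied with [t] the least
   integer above [D^(1/10)]. *)
Lemma exp20_threshold_bound (r s t c D : nat) :
  r * t <= c * s -> c ^ 20 <= D -> D < t ^ 10 -> r ^ 20 * D <= s ^ 20.
Proof.
move=> rt_le cD Dt.
case: (posnP D) => [->|D_gt0]; first by rewrite muln0.
have DD_le : D * D <= t ^ 20 by rewrite (_ : 20 = 10 + 10) // expnD leq_mul // ltnW.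
rewrite -(leq_pmul2r D_gt0) -mulnA (leq_trans (leq_mul (leqnn _) DD_le)) //.
rewrite -expnMn (@leq_trans ((c * s) ^ 20)) ?leq_exp2r // expnMn mulnC.
by rewrite leq_mul2l cD orbT.
Qed.

Section Peeling.
Variable V : finType.
Variables (e : rel V) (lam Delta : nat).
Hypothesis e_sym : symmetric e.
Hypothesis e_irr : irreflexive e.
Hypothesis e_forests : forest_partition e lam.
Hypothesis Delta_large : (2 * lam) ^ 20 <= Delta.

Lemma forest_partition_sum_deg_in (S : {set V}) :
  \sum_(v in S) deg_in e S v <= 2 * lam * #|S|.
Proof.
have [c [c_sym c_forest]] := e_forests.
have split_colours v : deg_in e S v =
    \sum_(i < lam) deg_in (fun x y => e x y && (c x y == i)) S v.
  rewrite /deg_in -sum1_card (partition_big (c v) predT) //=.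
  apply: eq_bigr => i _; rewrite -sum1_card; apply: eq_bigl => u.
  by rewrite !inE andbA.
rewrite (eq_bigr _ (fun v _ => split_colours v)) exchange_big /=.
apply: leq_trans (_ : \sum_(i < lam) 2 * #|S| <= _); last first.
  by rewrite sum_nat_const card_ord mulnA [lam * 2]mulnC.
apply: leq_sum => i _; have := forest_sum_deg_in _ _ (c_forest i) S; apply.
- by move=> x y; rewrite e_sym c_sym.
- by move=> x; rewrite e_irr.
Qed.

Lemma card_peel (S : {set V}) : #|peel e Delta S| ^ 20 * Delta <= #|S| ^ 20.
Proof.
have exists_above : exists t, Delta < t ^ 10.
  by exists Delta.+1; rewrite -[X in X <= _]expn1 leq_pexp2l.
case: (ex_minnP exists_above) => t Delta_lt t_min.
apply: (exp20_threshold_bound _ Delta_large Delta_lt).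
apply: (leq_trans _ (forest_partition_sum_deg_in S)).
apply: (@leq_trans (\sum_(v in peel e Delta S) deg_in e S v)).
  rewrite -sum_nat_const; apply: leq_sum => v.
  by rewrite inE -ltnNge => /andP[_ /t_min].
apply: sub_le_big => [//|m n|v]; first exact: leq_addr.
by rewrite inE => /andP[].
Qed.

Lemma card_remove_layers_exp (k : nat) (S : {set V}) :
  #|remove_layers e Delta k S| ^ 20 * Delta ^ k <= #|S| ^ 20.
Proof.
elim: k => [|k IHk]; first by rewrite muln1.
rewrite /remove_layers iterS (expnS Delta) mulnA.
exact: leq_trans (leq_mul (card_peel _) (leqnn _)) IHk.
Qed.

Lemma card_remove_layers (k : nat) (S : {set V}) :
  #|remove_layers e Delta (20 * k) S| * Delta ^ k <= #|S|.
Proof.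
rewrite -(leq_exp2r _ _ (isT : 0 < 20)) expnMn -expnM (mulnC k).
exact: card_remove_layers_exp.
Qed.

End Peeling.

Theorem lemma5 (V : finType) (e : rel V) (lam Delta : nat) (S0 : {set V}) :
  simple_graph e -> arboricity e lam -> maxdeg e = Delta ->
  (2 * lam) ^ 20 <= Delta ->
  forall i : nat, 1 <= i ->
    #|phase_graph e Delta S0 i| * (Delta * Delta ^ (2 ^ i)) <= #|V|.
Proof.
move=> [e_sym e_irr] [e_forests _] _ Delta_large.
have shrink := card_remove_layers e_sym e_irr e_forests Delta_large.
elim=> [|[|i] IHi] // _.
  apply: leq_trans (max_card S0); rewrite -expnS.
  exact: (shrink 3).
rewrite [phase_graph _ _ _ _.+2]/= -/(phase_graph e Delta S0 i.+1).
apply: leq_trans (IHi isT).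
have double : 2 ^ i.+2 = 2 ^ i.+1 + 2 ^ i.+1 by rewrite expnS mul2n addnn.
rewrite double expnD [Delta * _]mulnCA mulnA leq_mul2r.
by apply/orP; right; apply: shrink.
Qed.
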